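(* Let $K$ be a field of characteristic $0$, $U=K[x^{\pm1}]$ the Laurent polynomial algebra, $\beta\in K$, and let $Os(0,\beta)$ denote $U$ with the product $a\star b=\partial(ab)+2\beta x^{-2}ab$ ($\partial=d/dx$). Let $\overline{Os}(0,\beta)$ be the subspace spanned by the elements $\overline{x^i}$, $i\in\mathbb Z$, $i\neq-1$, where $\overline{x^i}=x^i$ for $i<-1$ and $\overline{x^i}=x^i+2(i+1)^{-1}\beta x^{i-1}$ for $i>-1$. Then $\overline{Os}(0,\beta)$ is closed under $\star$; moreover it is an ideal of $(Os(0,\beta),\star)$ of codimension $1$. *)

From HB Require Import structures.
From mathcomp Require Import all_boot all_order all_algebra.
Set Implicit Arguments. Unset Strict Implicit. Unset Printing Implicit Defensive.
Import Order.TTheory GRing.Theory Num.Theory.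
Local Open Scope ring_scope.

(* An element is represented in normal form by a pair (n, p) with
   n : nat and p : {poly K}, standing for x^(-n) * p, normalized so that
   n = 0 or x does not divide p (p`_0 != 0).  Hence Leibniz equality of
   [laurent K] is equality of Laurent polynomials. *)
Section Laurent.
Variable K : fieldType.

Definition lvalid (r : nat * {poly K}) : bool := (r.1 == 0%N) || (r.2`_0 != 0).

Record laurent := Laurent { lrep : nat * {poly K}; lrepP : lvalid lrep }.

Fixpoint lnorm (n : nat) (p : {poly K}) : nat * {poly K} :=
  match n with
  | 0%N => (0%N, p)
  | n'.+1 => if p`_0 == 0 then lnorm n' (drop_poly 1 p) else (n'.+1, p)
  end.

Lemma lnorm_valid n p : lvalid (lnorm n p).
Proof.
elim: n p => [|n IH] p /=; first by rewrite /lvalid eqxx.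
case: ifP => [_|H]; first exact: IH.
by rewrite /lvalid /= H.
Qed.

Definition mkL (n : nat) (p : {poly K}) : laurent := Laurent (lnorm_valid n p).

Definition lzero : laurent := mkL 0 0.
Definition ladd (a b : laurent) : laurent :=
  let: (n, p) := lrep a in let: (m, q) := lrep b in
  mkL (n + m) ('X^m * p + 'X^n * q).
Definition lscale (c : K) (a : laurent) : laurent :=
  let: (n, p) := lrep a in mkL n (c *: p).
Definition lmul (a b : laurent) : laurent :=
  let: (n, p) := lrep a in let: (m, q) := lrep b in mkL (n + m) (p * q).
(* d/dx (x^(-n) p) = x^(-(n+1)) (x p' - n p) *)
Definition lderiv (a : laurent) : laurent :=
  let: (n, p) := lrep a in mkL n.+1 ('X * p^`() - p *+ n).
Definition lmono (i : int) : laurent :=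
  match i with
  | Posz k => mkL 0 'X^k
  | Negz k => mkL k.+1 1
  end.

Definition lsum (s : seq (K * laurent)) : laurent :=
  foldr (fun cu acc => ladd (lscale cu.1 cu.2) acc) lzero s.

Definition os_star (beta : K) (a b : laurent) : laurent :=
  ladd (lderiv (lmul a b)) (lscale (2 * beta) (lmul (lmono (-2)) (lmul a b))).

Definition xbar (beta : K) (i : int) : laurent :=
  if i < -1 then lmono i
  else ladd (lmono i) (lscale (2 * ((i + 1)%:~R)^-1 * beta) (lmono (i - 1))).

Definition in_Osbar (beta : K) (u : laurent) : Prop :=
  exists s : seq (K * int),
    all (fun ci => ci.2 != -1) s /\
    u = lsum [seq (ci.1, xbar beta ci.2) | ci <- s].

End Laurent.

From mathcomp Require Import all_boot all_order all_algebra.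
Import Order.TTheory GRing.Theory Num.Theory.
Local Open Scope ring_scope.
From mathcomp Require Import zify ring.
Set Implicit Arguments. Unset Strict Implicit.

(* Formally put E := exp(-2 beta / x) = sum_t ecoef t x^-t.  Then a * b = E^-1 (E a b)', so the
   twisted residue phi u := Res (u E) = sum_t u_(t-1) ecoef t, a finite sum on Laurent
   polynomials, vanishes on every product: the sum telescopes.  It also vanishes on every
   xbar(x^i), and by induction on i every monomial x^i is congruent to phi(x^i) x^-1 modulo
   Osbar.  Hence Osbar = ker phi, a hyperplane (phi x^-1 = 1) that contains all products. *)

Section IntCoef.
Variable R : nzRingType.
Implicit Types (p q : {poly R}) (j : int).

Definition coefz p j : R := if j is Posz k then p`_k else 0.

Lemma coefzE p j : coefz p j = if 0 <= j then p`_(absz j) else 0.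
Proof. by case: j. Qed.

Lemma coefz_neg p j : j < 0 -> coefz p j = 0.
Proof. by case: j. Qed.

Lemma coefz_size p j : (size p)%:Z <= j -> coefz p j = 0.
Proof. by case: j => //= k le_pk; apply: nth_default; lia. Qed.

Lemma coefz0 j : coefz 0 j = 0.
Proof. by case: j => k /=; rewrite ?coef0. Qed.

Lemma coefz1 j : coefz 1 j = (j == 0)%:R.
Proof. by case: j => k /=; rewrite ?coef1. Qed.

Lemma coefzXn k j : coefz 'X^k j = (j == k)%:R.
Proof. by case: j => i /=; rewrite ?coefXn. Qed.

Lemma coefzB p q j : coefz (p - q) j = coefz p j - coefz q j.
Proof. by case: j => k /=; rewrite ?coefB ?subr0. Qed.

Lemma coefzD p q j : coefz (p + q) j = coefz p j + coefz q j.
Proof. by case: j => k /=; rewrite ?coefD ?addr0. Qed.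

Lemma coefzZ c p j : coefz (c *: p) j = c * coefz p j.
Proof. by case: j => k /=; rewrite ?coefZ ?mulr0. Qed.

Lemma coefzMn p n j : coefz (p *+ n) j = coefz p j *+ n.
Proof. by case: j => k /=; rewrite ?coefMn ?mul0rn. Qed.

Lemma coefzXnM m p j : coefz ('X^m * p) j = coefz p (j - m%:Z).
Proof.
rewrite !coefzE coefXnM; have [j_ge0|j_lt0] := boolP (0 <= j).
  case: ifP => lt_jm; case: ifP => ge0 //; try lia.
  by congr p`_ _; lia.
by rewrite ifF //; lia.
Qed.

Lemma coefz_drop1 p j : 0 <= j -> coefz (drop_poly 1 p) j = coefz p (j + 1).
Proof. by case: j => // k _; rewrite /= coef_drop_poly addn1. Qed.

Lemma coefzXderiv p j : coefz ('X * p^`()) j = j%:~R * coefz p j.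
Proof.
case: j => [[|k]|k] /=; rewrite ?mulr0 // coefXM /= ?mul0r //.
by rewrite coef_deriv mulr_natl.
Qed.

Lemma sum_coef_eq p (k : nat) : \sum_(j < size p) p`_j * (k == j)%:R = p`_k.
Proof.
have -> : p`_k = (\poly_(j < size p) p`_j)`_k by rewrite coefK.
rewrite poly_def coef_sum.
by apply: eq_bigr => j _; rewrite coefZ coefXn.
Qed.

End IntCoef.

Section LaurentCoef.
Variable K : fieldType.
Implicit Types (a b u : laurent K) (i : int).

Definition lcoef a i : K := coefz (lrep a).2 (i + (lrep a).1%:Z).

Lemma lcoef_mkL n p i : lcoef (mkL n p) i = coefz p (i + n%:Z).
Proof.
rewrite /lcoef /mkL /=; elim: n p i => [|n IHn] p i //=.
case: ifP => [/eqP p0_eq0|//]; rewrite IHn.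
have [ge0|lt0] := boolP (0 <= i + n%:Z); first by rewrite coefz_drop1 //; congr coefz; lia.
rewrite coefz_neg ?coefzE; last by lia.
by case: ifP => // ge0; rewrite (_ : absz _ = 0%N) ?p0_eq0 //; lia.
Qed.

Definition lsize a : nat := size (lrep a).2.

Lemma lcoef_eq0 a i : (lsize a)%:Z <= i -> lcoef a i = 0.
Proof.
by move=> le_si; rewrite /lcoef coefz_size //; apply: le_trans le_si _; rewrite lerDl.
Qed.

Lemma lcoef_inj a b : (forall i, lcoef a i = lcoef b i) -> a = b.
Proof.
case: a b => [[n p] valid_a] [[m q] valid_b] eq_ab; rewrite /lcoef /= in eq_ab.
have eq_nm : n = m.
  case: (ltngtP n m) => // [lt_nm | lt_mn].
  - move: valid_b; rewrite /lvalid /= gtn_eqF ?(leq_ltn_trans _ lt_nm) //=.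
    by have := eq_ab (- m%:Z); rewrite addNr /= => <-; rewrite coefz_neg ?eqxx //; lia.
  - move: valid_a; rewrite /lvalid /= gtn_eqF ?(leq_ltn_trans _ lt_mn) //=.
    by have := eq_ab (- n%:Z); rewrite addNr /= => ->; rewrite coefz_neg ?eqxx //; lia.
subst m; have eq_pq : p = q by apply/polyP => k; have := eq_ab (k%:Z - n%:Z); rewrite subrK.
by subst q; congr Laurent; apply: bool_irrelevance.
Qed.

Lemma lcoef0 i : lcoef (lzero K) i = 0.
Proof. by rewrite lcoef_mkL coefz0. Qed.

Lemma lcoefD a b i : lcoef (ladd a b) i = lcoef a i + lcoef b i.
Proof.
case: a b => [[n p] ?] [[m q] ?].
by rewrite /ladd lcoef_mkL coefzD !coefzXnM /lcoef /=; congr (coefz _ _ + coefz _ _); lia.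
Qed.

Lemma lcoefZ c a i : lcoef (lscale c a) i = c * lcoef a i.
Proof. by case: a => [[n p] ?]; rewrite /lscale lcoef_mkL coefzZ. Qed.

Lemma lcoef_lsum (s : seq (K * laurent K)) i :
  lcoef (lsum s) i = \sum_(cu <- s) cu.1 * lcoef cu.2 i.
Proof.
elim: s => [|cu s IHs]; first by rewrite big_nil lcoef0.
by rewrite big_cons lcoefD lcoefZ IHs.
Qed.

Lemma lcoef_mono k i : lcoef (lmono K k) i = (i == k)%:R.
Proof.
case: k => k; rewrite lcoef_mkL ?coefzXn ?coefz1 ?addr0 //.
by congr (_%:R); apply/eqP/eqP; lia.
Qed.

Lemma lcoef_deriv a i : lcoef (lderiv a) i = (i + 1)%:~R * lcoef a (i + 1).
Proof.
case: a => [[n p] ?]; rewrite /lderiv lcoef_mkL coefzB coefzMn coefzXderiv /lcoef /=.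
rewrite (_ : i + n.+1%:Z = i + 1 + n%:Z); last by lia.
by rewrite -mulr_natl -mulrBl intrD -pmulrn addrK.
Qed.

Lemma lcoef_mulXm2 a i : lcoef (lmul (lmono K (-2)) a) i = lcoef a (i + 2).
Proof.
have rep_Xm2 : lrep (lmono K (-2)) = (2%N, 1) by rewrite /= coef1 oner_eq0.
case: a => [[n p] ?]; rewrite /lmul rep_Xm2 lcoef_mkL mul1r /lcoef /=.
by congr coefz; lia.
Qed.

Lemma lsum_lcoef_mono u :
  let: (n, p) := lrep u in
  u = lsum [seq (p`_j, lmono K (j%:Z - n%:Z)) | j <- index_iota 0 (size p)].
Proof.
case: u => [[n p] ?] /=; apply: lcoef_inj => i.
have shift_eq (j : nat) : (i == j%:Z - n%:Z) = (i + n%:Z == j) by apply/eqP/eqP; lia.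
rewrite lcoef_lsum big_map big_mkord; under eq_bigr => j _ do rewrite /= lcoef_mono shift_eq.
rewrite /lcoef /=; case: (i + n%:Z) => k /=; last by rewrite big1 // => j _; rewrite mulr0.
by rewrite -sum_coef_eq; apply: eq_bigr => j _; rewrite eqz_nat.
Qed.

End LaurentCoef.

Section OsbarSpan.
Variables (K : fieldType) (beta : K).
Local Notation Osbar := (in_Osbar beta).

Lemma Osbar0 : Osbar (lzero K).
Proof. by exists [::]. Qed.

Lemma OsbarD a b : Osbar a -> Osbar b -> Osbar (ladd a b).
Proof.
move=> [s [s_ok ->]] [t [t_ok ->]]; exists (s ++ t); rewrite all_cat s_ok t_ok.
by split=> //; apply: lcoef_inj => i; rewrite lcoefD !lcoef_lsum map_cat big_cat.
Qed.

Lemma OsbarZ c a : Osbar a -> Osbar (lscale c a).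
Proof.
move=> [s [s_ok ->]]; exists [seq (c * ci.1, ci.2) | ci <- s]; rewrite all_map.
split=> //; apply: lcoef_inj => i; rewrite lcoefZ !lcoef_lsum -map_comp !big_map mulr_sumr.
by apply: eq_bigr => ci _; rewrite mulrA.
Qed.

Lemma Osbar_xbar k : k != -1 -> Osbar (xbar beta k).
Proof.
move=> k_neq; exists [:: (1, k)]; rewrite /= k_neq.
by split=> //; apply: lcoef_inj => i; rewrite lcoefD lcoefZ lcoef0 mul1r addr0.
Qed.

End OsbarSpan.

Section TwistedResidue.
Variables (K : fieldType) (beta : K).
Hypothesis charK0 : [pchar K] =i pred0.
Local Notation Osbar := (in_Osbar beta).
Implicit Types (a u w : laurent K).

Lemma char0_natr_neq0 n : (0 < n)%N -> n%:R != 0 :> K.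
Proof. by rewrite ((pcharf0P K).1 charK0) -lt0n. Qed.

Definition ecoef (t : nat) : K := (- (2 * beta)) ^+ t / t`!%:R.

Lemma ecoef0 : ecoef 0 = 1.
Proof. by rewrite /ecoef expr0 fact0 divr1. Qed.

Lemma ecoefS t : ecoef t.+1 = - (2 * beta) / t.+1%:R * ecoef t.
Proof.
have t1_neq0 := char0_natr_neq0 (ltn0Sn t); have fact_neq0 := char0_natr_neq0 (fact_gt0 t).
by rewrite /ecoef factS natrM exprS; field; rewrite fact_neq0 nat1r t1_neq0.
Qed.

Definition twisted_res a : K :=
  \sum_(0 <= t < (lsize a).+1) lcoef a (t%:Z - 1) * ecoef t.

Lemma twisted_resE a N : (lsize a < N)%N ->
  twisted_res a = \sum_(0 <= t < N) lcoef a (t%:Z - 1) * ecoef t.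
Proof.
move=> lt_aN; rewrite [RHS](big_cat_nat _ lt_aN) //= [X in _ + X]big1_seq ?addr0 //.
move=> t /andP[_]; rewrite mem_index_iota => /andP[le_at _].
by rewrite lcoef_eq0 ?mul0r //; lia.
Qed.

Lemma twisted_res0 : twisted_res (lzero K) = 0.
Proof. by rewrite /twisted_res big1 // => t _; rewrite lcoef0 mul0r. Qed.

Lemma twisted_resD a b : twisted_res (ladd a b) = twisted_res a + twisted_res b.
Proof.
pose N := (lsize a + lsize b + lsize (ladd a b)).+1.
rewrite !(twisted_resE (N := N)) /N; try lia.
by rewrite -big_split; apply: eq_bigr => t _; rewrite lcoefD mulrDl.
Qed.

Lemma twisted_resZ c a : twisted_res (lscale c a) = c * twisted_res a.
Proof.
pose N := (lsize a + lsize (lscale c a)).+1.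
rewrite !(twisted_resE (N := N)) /N; try lia.
by rewrite mulr_sumr; apply: eq_bigr => t _; rewrite lcoefZ mulrA.
Qed.

Lemma twisted_res_mono_pred (m : nat) : twisted_res (lmono K (m%:Z - 1)) = ecoef m.
Proof.
set a := lmono K _; rewrite (twisted_resE (N := (lsize a + m).+1)); last lia.
rewrite (big_cat_nat _ (n := m)) //=; last lia.
rewrite big1_seq => [|t]; last first.
  rewrite mem_index_iota lcoef_mono => /andP[_ /andP[_ lt_tm]].
  by rewrite (_ : _ == _ = false) ?mul0r //; lia.
rewrite big_ltn; last lia.
rewrite big1_seq => [|t]; last first.
  rewrite mem_index_iota lcoef_mono => /andP[_ /andP[lt_mt _]].
  by rewrite (_ : _ == _ = false) ?mul0r //; lia.
by rewrite lcoef_mono eqxx mul1r add0r addr0.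
Qed.

Lemma twisted_res_mono_lt k : k < -1 -> twisted_res (lmono K k) = 0.
Proof.
move=> lt_k; rewrite /twisted_res big1 // => t _.
by rewrite lcoef_mono (_ : _ == _ = false) ?mul0r //; lia.
Qed.

Lemma twisted_res_mono_nat (m : nat) : twisted_res (lmono K m%:Z) = ecoef m.+1.
Proof. by rewrite -twisted_res_mono_pred; congr (twisted_res (lmono K _)); lia. Qed.

Lemma xbar_nat (m : nat) :
  xbar beta m%:Z = ladd (lmono K m%:Z) (lscale (2 * m.+1%:R^-1 * beta) (lmono K (m%:Z - 1))).
Proof.
rewrite /xbar (_ : (m%:Z < -1) = false); last lia.
by rewrite (_ : m%:Z + 1 = m.+1%:Z) ?pmulrn; last lia.
Qed.

Lemma twisted_res_xbar k : k != -1 -> twisted_res (xbar beta k) = 0.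
Proof.
move=> k_neq; case: (boolP (k < -1)) => [lt_k|ge_k].
  by rewrite /xbar lt_k twisted_res_mono_lt.
rewrite (_ : k = (absz k)%:Z); last lia.
rewrite xbar_nat twisted_resD twisted_resZ twisted_res_mono_nat twisted_res_mono_pred ecoefS.
by field; rewrite nat1r char0_natr_neq0.
Qed.

Lemma twisted_res_Osbar a : Osbar a -> twisted_res a = 0.
Proof.
move=> [s [s_ok ->]]; elim: s s_ok => [|[c k] s IHs] /=; first by rewrite twisted_res0.
move=> /andP[k_neq s_ok].
by rewrite twisted_resD twisted_resZ twisted_res_xbar ?IHs ?mulr0 ?addr0.
Qed.

Lemma twisted_res_os_star u w : twisted_res (os_star beta u w) = 0.
Proof.
pose g := lmul u w; pose N := (lsize (os_star beta u w) + lsize g).+1.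
pose F t := t%:R * lcoef g t%:Z * ecoef t.
rewrite (twisted_resE (N := N)); last lia.
have telescoping t : lcoef (os_star beta u w) (t%:Z - 1) * ecoef t = - (F t.+1 - F t).
  rewrite /F ecoefS lcoefD lcoef_deriv lcoefZ lcoef_mulXm2 subrK.
  rewrite (_ : t%:Z - 1 + 2 = t.+1%:Z); last lia.
  by field; rewrite nat1r char0_natr_neq0.
rewrite (eq_bigr _ (fun t _ => telescoping t)) sumrN telescope_sumr //.
rewrite /F lcoef_eq0 /N; last lia.
by rewrite !(mulr0, mul0r) subrr oppr0.
Qed.

Definition twisted_rem a := ladd a (lscale (- twisted_res a) (lmono K (-1))).

Lemma twisted_rem0 : twisted_rem (lzero K) = lzero K.
Proof.
by apply: lcoef_inj => i; rewrite lcoefD lcoefZ twisted_res0 lcoef0 oppr0 mul0r addr0.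
Qed.

Lemma twisted_remD a b : twisted_rem (ladd a b) = ladd (twisted_rem a) (twisted_rem b).
Proof. by apply: lcoef_inj => i; rewrite !(lcoefD, lcoefZ) twisted_resD; ring. Qed.

Lemma twisted_remZ c a : twisted_rem (lscale c a) = lscale c (twisted_rem a).
Proof. by apply: lcoef_inj => i; rewrite !(lcoefD, lcoefZ) twisted_resZ; ring. Qed.

Lemma twisted_rem_id a : twisted_res a = 0 -> twisted_rem a = a.
Proof.
by move=> res0; apply: lcoef_inj => i; rewrite lcoefD lcoefZ res0 oppr0 mul0r addr0.
Qed.

Lemma Osbar_twisted_rem_mono_pred (m : nat) : Osbar (twisted_rem (lmono K (m%:Z - 1))).
Proof.
elim: m => [|m IHm].
  have -> : twisted_rem (lmono K (0%:Z - 1)) = lzero K; last exact: Osbar0.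
  apply: lcoef_inj => i; rewrite lcoefD lcoefZ twisted_res_mono_pred ecoef0 lcoef0.
  by rewrite mulN1r subrr.
rewrite (_ : m.+1%:Z - 1 = m%:Z); last lia.
have -> : twisted_rem (lmono K m%:Z) =
    ladd (xbar beta m%:Z)
      (lscale (- (2 * m.+1%:R^-1 * beta)) (twisted_rem (lmono K (m%:Z - 1)))).
  apply: lcoef_inj => i; rewrite /twisted_rem xbar_nat !(lcoefD, lcoefZ).
  by rewrite twisted_res_mono_nat twisted_res_mono_pred ecoefS; ring.
by apply: OsbarD; [apply: Osbar_xbar; lia | exact: OsbarZ IHm].
Qed.

Lemma Osbar_twisted_rem_mono k : Osbar (twisted_rem (lmono K k)).
Proof.
case: (boolP (k < -1)) => [lt_k|ge_k].
  rewrite twisted_rem_id ?twisted_res_mono_lt //.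
  by have := Osbar_xbar beta (k := k); rewrite /xbar lt_k; apply; lia.
by rewrite (_ : k = (absz (k + 1))%:Z - 1); [exact: Osbar_twisted_rem_mono_pred | lia].
Qed.

Lemma Osbar_twisted_rem u : Osbar (twisted_rem u).
Proof.
have := lsum_lcoef_mono u; case: (lrep u) => n p ->.
elim: (index_iota 0 (size p)) => [|j s IHs] /=; first by rewrite twisted_rem0; exact: Osbar0.
by rewrite twisted_remD twisted_remZ; apply: OsbarD IHs; apply/OsbarZ/Osbar_twisted_rem_mono.
Qed.

Lemma Osbar_os_star u w : Osbar (os_star beta u w).
Proof.
by rewrite -[os_star _ _ _]twisted_rem_id ?twisted_res_os_star //; exact: Osbar_twisted_rem.
Qed.

End TwistedResidue.

Theorem mainTheorem15 (K : fieldType) (hK : [pchar K] =i pred0) (beta : K) :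
  (* closed under the product *)
  (forall a b : laurent K, in_Osbar beta a -> in_Osbar beta b ->
     in_Osbar beta (os_star beta a b))
  /\
  (* two-sided ideal of (Os(0,beta), star) *)
  (forall u v : laurent K, in_Osbar beta v ->
     in_Osbar beta (os_star beta u v) /\ in_Osbar beta (os_star beta v u))
  /\
  (* codimension 1: U / Osbar is one-dimensional *)
  (exists e : laurent K, ~ in_Osbar beta e /\
     forall u : laurent K, exists c : K, in_Osbar beta (ladd u (lscale (- c) e))).
Proof.
split; first by move=> a b _ _; exact: Osbar_os_star.
split; first by move=> u v _; split; exact: Osbar_os_star.
exists (lmono K (-1)); split.
  move=> /(twisted_res_Osbar hK); have := twisted_res_mono_pred beta 0.
  by rewrite ecoef0 => ->; apply/eqP; rewrite oner_eq0.
by move=> u; exists (twisted_res beta u); exact: Osbar_twisted_rem.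
Qed.
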